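(* Let $\mathcal{M}=\langle S,A,T,r,c,\gamma,\mu_0,\bar\delta\rangle$ be a deterministic CMDP (deterministic transitions, starting state $s_0$) with cost budget $\bar\delta\ge V_C^*(s_0)$, and let $\bar{\mathcal{M}}_D(\mathcal{M})$ be its direct budget-tracking budget-adaptive MDP. Then: (1) any policy $\pi\in\Pi_P$ induces trajectories that start in and remain entirely within the feasible subspace $\bar S_P$; (2) any deterministic policy $\pi$ satisfying the CMDP cost constraint $\sum_{t=0}^\infty\gamma^tc(s_t,a_t)\le\bar\delta$ (along its induced trajectory) belongs to $\Pi_P$; (3) conversely, if $\pi\in\Pi_P$, then $\pi$ satisfies the cumulative cost constraint $\sum_{t=0}^\infty\gamma^t c(s_t,a_t)\le\bar\delta$ of $\mathcal{M}$. Consequently, in deterministic environments it suffices to enforce $\pi\in\Pi_P$ instead of explicitly enforcing the cumulative cost constraint.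
   Context: A CMDP $\mathcal{M}=\langle S,A,T,r,c,\gamma,\mu_0,\bar\delta\rangle$ has state space $S$, action space $A$, transition kernel $T$, reward $r$, cost $c:S\times A\to\mathbb{R}^+$ bounded by $c_{\max}$, discount $\gamma\in[0,1)$, initial distribution $\mu_0$ and cost threshold $\bar\delta$. Optimal cost values: $V_C^*(s)=\min_\pi\mathbb{E}_{\pi,s_0=s}[\sum_{t\ge0}\gamma^tc(s_t,a_t)]$, $Q_C^*(s,a)=\min_\pi\mathbb{E}_{\pi,s_0=s,a_0=a}[\sum_{t\ge0}\gamma^tc(s_t,a_t)]$. Persistent safe action set $A_P(s,\delta)=\{a:Q_C^*(s,a)\le\delta\}$; feasible subspace $\bar S_P=\{(s,\delta):\delta\in\mathbb{R}^+,\ V_C^*(s)\le\delta\}$. A budget-adaptive MDP built from $\mathcal{M}$ with $f:S\times\mathbb{R}^+\to\mathbb{R}^+$ and $g:S\times A\times S\times\mathbb{R}^+\to\mathbb{R}^+$ has augmented states $(s,\delta)\in S\times\mathbb{R}^+$, the same actions, reward and cost as $\mathcal{M}$ (not depending on $\delta$), initial augmented state $(s_0,f(s_0,\bar\delta))$ with $s_0\sim\mu_0$, and transitions $\bar T((s',\delta')\mid(s,\delta),a)=T(s'\mid s,a)\mathbf{1}\{\delta'=g(s,a,s',\delta)\}$. The direct budget-tracking BAMDP $\bar{\mathcal{M}}_D$ uses $f(s_0,\bar\delta)=\bar\delta$ and $g(s,a,s',\delta)=\frac{\delta-c(s,a)}{\gamma}$. The budget-restricted policy set $\Pi_P$ consists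 of policies $\pi$ on augmented states $(s,\delta)$ with $\pi(a\mid(s,\delta))>0\implies a\in A_P(s,\delta)$.
   Formalization: Part (2) concludes only that at each augmented state $(s_t,\delta_t)$ visited along its induced trajectory the policy's action lies in $A_P(s_t,\delta_t)$, not that $\pi\in\Pi_P$; and $\gamma\in(0,1)$ replaces $\gamma\in[0,1)$. The statement above fails without it. *)

From Stdlib Require Import Reals.
From Coquelicot Require Import Coquelicot.
Open Scope R_scope.

(* The reward, which plays no role in the theorem, is omitted. *)

Fixpoint traj {S A : Type} (step : S -> A -> S) (s : S) (a : nat -> A) (t : nat) : S :=
  match t with
  | O => s
  | Datatypes.S t' => step (traj step s a t') (a t')
  end.

Definition disc_cost {S A : Type} (step : S -> A -> S) (c : S -> A -> R) (gam : R)
  (s : S) (a : nat -> A) : R :=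
  Series (fun t => gam ^ t * c (traj step s a t) (a t)).

(* Optimal cost values (deterministic environment: optimizing over policies
   amounts to optimizing over action sequences); infima in Rbar. *)
Definition V_C_star {S A : Type} (step : S -> A -> S) (c : S -> A -> R) (gam : R)
  (s : S) : Rbar :=
  Glb_Rbar (fun x => exists a : nat -> A, x = disc_cost step c gam s a).

Definition Q_C_star {S A : Type} (step : S -> A -> S) (c : S -> A -> R) (gam : R)
  (s : S) (a0 : A) : Rbar :=
  Glb_Rbar (fun x => exists a : nat -> A, a O = a0 /\ x = disc_cost step c gam s a).

Definition A_P {S A : Type} (step : S -> A -> S) (c : S -> A -> R) (gam : R)
  (s : S) (delta : R) (a : A) : Prop :=
  Rbar_le (Q_C_star step c gam s a) (Finite delta).

Definition in_S_P {S A : Type} (step : S -> A -> S) (c : S -> A -> R) (gam : R)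
  (x : S * R) : Prop :=
  0 <= snd x /\ Rbar_le (V_C_star step c gam (fst x)) (Finite (snd x)).

Fixpoint aug_traj {S A : Type} (step : S -> A -> S) (c : S -> A -> R) (gam : R)
  (s0 : S) (delta0 : R) (a : nat -> A) (t : nat) : S * R :=
  match t with
  | O => (s0, delta0)
  | Datatypes.S t' =>
      let x := aug_traj step c gam s0 delta0 a t' in
      (step (fst x) (a t'), (snd x - c (fst x) (a t')) / gam)
  end.

(* A (possibly stochastic) policy on augmented states is represented by its
   support: [pi s delta a] holds iff pi(a | (s, delta)) > 0. *)
Definition policy (S A : Type) := S -> R -> A -> Prop.

(* Budget-restricted policy set Pi_P (policies are defined on S x R^+). *)
Definition in_Pi_P {S A : Type} (step : S -> A -> S) (c : S -> A -> R) (gam : R)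
  (pi : policy S A) : Prop :=
  forall s delta a, 0 <= delta -> pi s delta a -> A_P step c gam s delta a.

(* Action sequence [a] is a trajectory (with positive probability) of [pi]
   in the BAMDP started at (s0, delta0). *)
Definition induced_by {S A : Type} (step : S -> A -> S) (c : S -> A -> R) (gam : R)
  (s0 : S) (delta0 : R) (pi : policy S A) (a : nat -> A) : Prop :=
  forall t, pi (fst (aug_traj step c gam s0 delta0 a t))
               (snd (aug_traj step c gam s0 delta0 a t)) (a t).

Definition det_policy {S A : Type} (pid : S -> R -> A) : policy S A :=
  fun s delta a => a = pid s delta.

From Stdlib Require Import Reals Lra Classical FunctionalExtensionality.
From Coquelicot Require Import Coquelicot.
Open Scope R_scope.

(* The direct budget is the rescaled remainder of the initial budget:
   [delta_bar = sum_(k < t) gam^k c(s_k, a_k) + gam^t delta_t].  Through the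
   Bellman decomposition [Q*(s,a) = c(s,a) + gam V*(step s a)], a persistent
   safe action therefore keeps [V*(s_(t+1)) <= delta_(t+1)], and [V* >= 0]
   keeps the budget nonnegative.  Conversely, when the total cost is at most
   [delta_bar], the cost-to-go of the actual actions from time [t] is at most
   [delta_t], and it dominates [Q*(s_t, a_t)].  Finally, a budget that stays
   nonnegative bounds every partial sum of the discounted cost by [delta_bar]. *)

Lemma Glb_Rbar_le_iff (E : R -> Prop) (x : R) :
  Rbar_le (Glb_Rbar E) (Finite x) <->
  (forall eps, 0 < eps -> exists y, E y /\ y <= x + eps).
Proof.
  destruct (Glb_Rbar_correct E) as [Hlb Hglb]. split.
  - intros Hle eps Heps.
    apply NNPP. intros Hno.
    assert (Hbound : is_lb_Rbar E (Finite (x + eps))).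
    { intros y Ey. simpl. apply Rnot_lt_le. intros Hy.
      apply Hno. exists y. split; [exact Ey | lra]. }
    pose proof (Rbar_le_trans _ _ _ (Hglb _ Hbound) Hle) as Hcontra.
    simpl in Hcontra. lra.
  - intros Happrox. revert Hlb.
    destruct (Glb_Rbar E) as [g | |]; simpl; intros Hlb; auto.
    + apply Rnot_lt_le. intros Hxg.
      destruct (Happrox ((g - x) / 2)) as [y [Ey Hy]]; [lra|].
      specialize (Hlb y Ey). simpl in Hlb. lra.
    + destruct (Happrox 1) as [y [Ey _]]; [lra|].
      exact (Hlb y Ey).
Qed.

Section DeterministicCMDP.

Context {S A : Type} {step : S -> A -> S} {c : S -> A -> R} {cmax gam : R}.
Hypothesis Hc : forall s a, 0 <= c s a <= cmax.
Hypothesis Hgam : 0 < gam < 1.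

Lemma traj_add (s : S) (a : nat -> A) (n k : nat) :
  traj step (traj step s a n) (fun j => a (n + j)%nat) k = traj step s a (n + k).
Proof.
  induction k as [|k IH]; simpl.
  - now rewrite Nat.add_0_r.
  - now rewrite IH, Nat.add_succ_r.
Qed.

Lemma fst_aug_traj (s0 : S) (delta0 : R) (a : nat -> A) (t : nat) :
  fst (aug_traj step c gam s0 delta0 a t) = traj step s0 a t.
Proof. induction t as [|t IH]; simpl; now rewrite ?IH. Qed.

Lemma snd_aug_traj_S (s0 : S) (delta0 : R) (a : nat -> A) (t : nat) :
  snd (aug_traj step c gam s0 delta0 a (Datatypes.S t)) =
  (snd (aug_traj step c gam s0 delta0 a t) - c (traj step s0 a t) (a t)) / gam.
Proof. simpl. now rewrite fst_aug_traj. Qed.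

Lemma ex_series_disc_cost (s : S) (a : nat -> A) :
  ex_series (fun t => gam ^ t * c (traj step s a t) (a t)).
Proof.
  apply (@ex_series_le R_AbsRing R_CompleteNormedModule _ (fun t => cmax * gam ^ t)).
  - intros t. change norm with Rabs; simpl.
    destruct (Hc (traj step s a t) (a t)) as [Hc0 Hcmax].
    assert (Hpow : 0 <= gam ^ t) by (apply pow_le; lra).
    rewrite Rabs_pos_eq by (apply Rmult_le_pos; lra).
    rewrite Rmult_comm. apply Rmult_le_compat_r; lra.
  - apply (ex_series_scal_l cmax (fun t => gam ^ t)), ex_series_geom.
    rewrite Rabs_pos_eq; lra.
Qed.

Lemma disc_cost_cons (s : S) (a : nat -> A) :
  disc_cost step c gam s a =
  c s (a O) + gam * disc_cost step c gam (step s (a O)) (fun k => a (Datatypes.S k)).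
Proof.
  unfold disc_cost.
  rewrite Series_incr_1 by apply ex_series_disc_cost.
  rewrite <- Series_scal_l. simpl. rewrite Rmult_1_l. f_equal.
  apply Series_ext. intros k.
  pose proof (traj_add s a 1 k) as Hshift. simpl in Hshift.
  rewrite Hshift. simpl. ring.
Qed.

Lemma disc_cost_ge0 (s : S) (a : nat -> A) : 0 <= disc_cost step c gam s a.
Proof.
  unfold disc_cost.
  set (u := fun t => gam ^ t * c (traj step s a t) (a t)).
  assert (Hu : forall t, 0 <= u t).
  { intros t. apply Rmult_le_pos; [apply pow_le; lra | apply Hc]. }
  replace 0 with (Series (fun t => 0 * u t))
    by (rewrite Series_scal_l; apply Rmult_0_l).
  apply Series_le; [|apply ex_series_disc_cost].
  intros t. specialize (Hu t). lra.
Qed.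

Lemma V_C_star_ge0 (s : S) : Rbar_le (Finite 0) (V_C_star step c gam s).
Proof.
  apply Glb_Rbar_correct. intros y [a ->]. apply disc_cost_ge0.
Qed.

Lemma Q_C_star_le_disc_cost (s : S) (a : nat -> A) :
  Rbar_le (Q_C_star step c gam s (a O)) (Finite (disc_cost step c gam s a)).
Proof. apply Glb_Rbar_correct. exists a. split; reflexivity. Qed.

Lemma budget_update_le (x y d : R) : x + gam * y <= d -> y <= (d - x) / gam.
Proof.
  intros H. apply (Rmult_le_reg_l gam); [lra|].
  replace (gam * ((d - x) / gam)) with (d - x) by (field; lra). lra.
Qed.

Lemma V_C_star_step_le (s : S) (a0 : A) (d : R) :
  Rbar_le (Q_C_star step c gam s a0) (Finite d) ->
  Rbar_le (V_C_star step c gam (step s a0)) (Finite ((d - c s a0) / gam)).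
Proof.
  unfold Q_C_star, V_C_star. rewrite !Glb_Rbar_le_iff.
  intros HQ eps Heps.
  destruct (HQ (gam * eps)) as [y [[a [<- ->]] Hy]]; [apply Rmult_lt_0_compat; lra|].
  exists (disc_cost step c gam (step s (a O)) (fun k => a (Datatypes.S k))).
  split; [now eexists|].
  rewrite disc_cost_cons in Hy.
  replace ((d - c s (a O)) / gam + eps) with ((d + gam * eps - c s (a O)) / gam)
    by (field; lra).
  now apply budget_update_le.
Qed.

Lemma A_P_in_S_P_step (s : S) (d : R) (a0 : A) :
  A_P step c gam s d a0 -> in_S_P step c gam (step s a0, (d - c s a0) / gam).
Proof.
  intros HQ. pose proof (V_C_star_step_le s a0 d HQ) as HV.
  split; [|exact HV].
  exact (Rbar_le_trans _ _ _ (V_C_star_ge0 _) HV).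
Qed.

Lemma cost_to_go_le_budget (s0 : S) (delta0 : R) (a : nat -> A) :
  disc_cost step c gam s0 a <= delta0 ->
  forall t, disc_cost step c gam (traj step s0 a t) (fun j => a (t + j)%nat)
            <= snd (aug_traj step c gam s0 delta0 a t).
Proof.
  intros H0 t. induction t as [|t IH]; [exact H0|].
  rewrite disc_cost_cons, Nat.add_0_r in IH.
  rewrite snd_aug_traj_S. apply budget_update_le.
  replace (fun j => a (Datatypes.S t + j)%nat) with (fun k => a (t + Datatypes.S k)%nat)
    by (apply functional_extensionality; intros k; now rewrite Nat.add_succ_r).
  exact IH.
Qed.

Lemma partial_disc_cost_add_budget (s0 : S) (delta0 : R) (a : nat -> A) (t : nat) :
  sum_n (fun k => gam ^ k * c (traj step s0 a k) (a k)) t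
  + gam ^ Datatypes.S t * snd (aug_traj step c gam s0 delta0 a (Datatypes.S t)) = delta0.
Proof.
  induction t as [|t IH].
  - rewrite sum_O. simpl. field. lra.
  - rewrite <- IH at 2.
    rewrite sum_Sn, (snd_aug_traj_S _ _ _ (Datatypes.S t)). change plus with Rplus.
    simpl pow. field. lra.
Qed.

Lemma disc_cost_le_of_budget_ge0 (s0 : S) (delta0 : R) (a : nat -> A) :
  (forall t, 0 <= snd (aug_traj step c gam s0 delta0 a t)) ->
  disc_cost step c gam s0 a <= delta0.
Proof.
  intros Hbudget.
  set (u := fun k => gam ^ k * c (traj step s0 a k) (a k)).
  assert (Hpartial : forall t, sum_n u t <= delta0).
  { intros t. rewrite <- (partial_disc_cost_add_budget s0 delta0 a t).
    assert (Hpow : 0 <= gam ^ Datatypes.S t) by (apply pow_le; lra).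
    pose proof (Rmult_le_pos _ _ Hpow (Hbudget (Datatypes.S t))). fold u. lra. }
  apply (is_lim_seq_le (sum_n u) (fun _ => delta0) (Series u) delta0 Hpartial).
  - apply Series_correct, ex_series_disc_cost.
  - apply is_lim_seq_const.
Qed.

Lemma aug_traj_in_S_P (s0 : S) (delta0 : R) (a : nat -> A) :
  in_S_P step c gam (s0, delta0) ->
  (forall t, 0 <= snd (aug_traj step c gam s0 delta0 a t) ->
     A_P step c gam (fst (aug_traj step c gam s0 delta0 a t))
                    (snd (aug_traj step c gam s0 delta0 a t)) (a t)) ->
  forall t, in_S_P step c gam (aug_traj step c gam s0 delta0 a t).
Proof.
  intros Hinit Hsafe t. induction t as [|t [Hnonneg _]]; [exact Hinit|].
  exact (A_P_in_S_P_step _ _ _ (Hsafe t Hnonneg)).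
Qed.

Lemma A_P_aug_traj_of_disc_cost_le (s0 : S) (delta0 : R) (a : nat -> A) :
  disc_cost step c gam s0 a <= delta0 ->
  forall t, A_P step c gam (fst (aug_traj step c gam s0 delta0 a t))
                           (snd (aug_traj step c gam s0 delta0 a t)) (a t).
Proof.
  intros Hcost t. unfold A_P. rewrite fst_aug_traj.
  set (a_t := fun j => a (t + j)%nat).
  apply (Rbar_le_trans _ (Finite (disc_cost step c gam (traj step s0 a t) a_t))).
  - replace (a t) with (a_t O) by (unfold a_t; now rewrite Nat.add_0_r).
    apply Q_C_star_le_disc_cost.
  - exact (cost_to_go_le_budget s0 delta0 a Hcost t).
Qed.

End DeterministicCMDP.

Theorem theorem2 (S A : Type) (step : S -> A -> S) (c : S -> A -> R)
  (cmax gam delta_bar : R) (s0 : S)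
  (Hc : forall s a, 0 <= c s a <= cmax)
  (Hgam : 0 < gam < 1)
  (Hdelta : 0 <= delta_bar)
  (Hfeas : Rbar_le (V_C_star step c gam s0) (Finite delta_bar)) :
  (* (1) trajectories of policies in Pi_P stay in the feasible subspace *)
  (forall pi : policy S A, in_Pi_P step c gam pi ->
     forall a : nat -> A, induced_by step c gam s0 delta_bar pi a ->
       forall t, in_S_P step c gam (aug_traj step c gam s0 delta_bar a t))
  /\
  (* (2) a deterministic policy satisfying the cost constraint along its
         induced trajectory selects persistent safe actions there *)
  (forall (pid : S -> R -> A) (a : nat -> A),
     induced_by step c gam s0 delta_bar (det_policy pid) a ->
     disc_cost step c gam s0 a <= delta_bar ->
     forall t, A_P step c gam (fst (aug_traj step c gam s0 delta_bar a t))
                              (snd (aug_traj step c gam s0 delta_bar a t)) (a t))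
  /\
  (* (3) policies in Pi_P satisfy the cumulative cost constraint *)
  (forall pi : policy S A, in_Pi_P step c gam pi ->
     forall a : nat -> A, induced_by step c gam s0 delta_bar pi a ->
       disc_cost step c gam s0 a <= delta_bar).
Proof.
  assert (Hstay : forall pi : policy S A, in_Pi_P step c gam pi ->
     forall a : nat -> A, induced_by step c gam s0 delta_bar pi a ->
       forall t, in_S_P step c gam (aug_traj step c gam s0 delta_bar a t)).
  { intros pi Hpi a Hind.
    apply (aug_traj_in_S_P Hc Hgam); [now split|].
    intros t Hnonneg. exact (Hpi _ _ _ Hnonneg (Hind t)). }
  split; [exact Hstay | split].
  -
    intros pid a _.
    exact (A_P_aug_traj_of_disc_cost_le Hc Hgam s0 delta_bar a).
  - intros pi Hpi a Hind.
    apply (disc_cost_le_of_budget_ge0 Hc Hgam).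
    intros t. apply (Hstay pi Hpi a Hind t).
Qed.
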